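(* Let $G$ be a finite abelian group, $H_1$ a subgroup of $G$, and $A_1$ a proper subset of $H_1$ such that the elements $x-y$ ($x,y\in A_1$) generate $H_1$. Let $S$ be the set of all subgroups $J\le G$ such that $A_1$ is a union of cosets of $J$. Choose any set (possibly empty) of cosets of $H_1$ different from $H_1$ itself, and partition each chosen coset into cosets of subgroups belonging to $S$. Let $\mathcal{A}$ consist of $A_1$ together with all sets in these partitions. Then $\mathcal{A}$ is a bimodal collection of pairwise disjoint subsets of $G$ in which $A_1$ is the unique member whose size is smaller than the order of its internal difference group.
   Context: $G$ is written additively. The internal difference group of a subset $T\subseteq G$ is the subgroup generated by all $x-y$ with $x,y\in T$. A collection $\{A_1,\dots,A_m\}$ of pairwise disjoint subsets of $G$ is bimodal if for every $i$ and every $\delta\in G\setminus\{0\}$, the number $N_i(\delta)$ of pairs $(a,b)$ with $a\in A_i$, $b\in A_j$ for some $j\neq i$, and $a-b=\delta$, satisfies $N_i(\delta)\in\{0,|A_i|\}$. *)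

From HB Require Import structures.
From mathcomp Require Import all_boot all_order all_algebra.
Set Implicit Arguments. Unset Strict Implicit. Unset Printing Implicit Defensive.
Import GRing.Theory.
Local Open Scope ring_scope.

Definition is_subgrp (G : finZmodType) (H : {set G}) : bool :=
  (0 \in H) && [forall x in H, forall y in H, x - y \in H].

Definition diffs (G : finZmodType) (T : {set G}) : {set G} :=
  [set x - y | x in T, y in T].

Definition diffgrp (G : finZmodType) (T : {set G}) : {set G} :=
  \bigcap_(K : {set G} | is_subgrp K && (diffs T \subset K)) K.

Definition coset_of (G : finZmodType) (J : {set G}) (x : G) : {set G} :=
  [set x + j | j in J].

Definition union_of_cosets (G : finZmodType) (J A : {set G}) : Prop :=
  exists X : {set G}, A = \bigcup_(x in X) coset_of J x.

Definition Ncount (G : finZmodType) (coll : {set {set G}}) (A : {set G})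
  (delta : G) : nat :=
  #|[set ab : G * G | [&& ab.1 \in A,
        [exists B in coll, (B != A) && (ab.2 \in B)] &
        ab.1 - ab.2 == delta]]|.

Definition bimodal (G : finZmodType) (coll : {set {set G}}) : Prop :=
  forall A, A \in coll -> forall delta : G, delta != 0 ->
    Ncount coll A delta = 0%N \/ Ncount coll A delta = #|A|.

From mathcomp Require Import all_boot all_order all_algebra.
Import GRing.Theory.
Set Implicit Arguments. Unset Strict Implicit.
Local Open Scope ring_scope.

(* Every block B = x + J of the partitions is a coset of a subgroup J <= H1,
   since B lies in a coset of H1, and the union U of the collection is stable
   under translation by J: it consists of A1, a union of J-cosets, and of whole
   H1-cosets.  Hence U \ B is stable under J, which contains every difference
   of elements of B, so whether a - delta lies in another member does not
   depend on a in B, i.e. N_B(delta) is 0 or |B|.  The same argument works for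
   A1 with H1 in place of J, as U \ A1 is a union of H1-cosets.  Finally a
   coset of J has difference group J, of its own size, whereas the difference
   group H1 of A1 is strictly larger than A1. *)

Lemma subrBB (V : zmodType) (x y z : V) : (x - z) - (y - z) = x - y.
Proof. by rewrite opprB addrA subrK. Qed.

Section Cosets.
Variable G : finZmodType.
Implicit Types (A H J K : {set G}) (x y : G).

Lemma subgrp0 H : is_subgrp H -> 0 \in H.
Proof. by case/andP. Qed.

Lemma subgrpB H x y : is_subgrp H -> x \in H -> y \in H -> x - y \in H.
Proof. by case/andP=> _ /forall_inP hH Hx; apply: (forall_inP (hH x Hx)). Qed.

Lemma subgrpN H x : is_subgrp H -> x \in H -> - x \in H.
Proof. by move=> hH Hx; rewrite -sub0r subgrpB ?subgrp0. Qed.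

Lemma subgrpD H x y : is_subgrp H -> x \in H -> y \in H -> x + y \in H.
Proof. by move=> hH Hx Hy; rewrite -[y]opprK subgrpB ?subgrpN. Qed.

Lemma mem_coset J x y : (y \in coset_of J x) = (y - x \in J).
Proof.
apply/imsetP/idP => [[j Jj ->]|Jyx]; first by rewrite addrC addKr.
by exists (y - x); rewrite // addrC subrK.
Qed.

Lemma coset0 J : coset_of J 0 = J.
Proof. by apply/setP => y; rewrite mem_coset subr0. Qed.

Lemma card_coset J x : #|coset_of J x| = #|J|.
Proof. exact/card_imset/addrI. Qed.

Lemma eq_coset H x y : is_subgrp H -> y \in coset_of H x -> coset_of H y = coset_of H x.
Proof.
rewrite mem_coset => hH Hyx; apply/setP => z; rewrite !mem_coset.
apply/idP/idP => [Hzy|Hzx]; last by rewrite -(subrBB _ _ x) subgrpB.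
by rewrite -(subrBB _ _ y) subgrpB // -opprB subgrpN.
Qed.

Lemma disjoint_cosets H x y :
  is_subgrp H -> coset_of H x != coset_of H y -> [disjoint coset_of H x & coset_of H y].
Proof.
move=> hH; apply: contraR => /pred0Pn [z /andP [zx zy]].
by rewrite -(eq_coset hH zx) -(eq_coset hH zy).
Qed.

Lemma diffs_coset J x : is_subgrp J -> diffs (coset_of J x) = J.
Proof.
move=> hJ; apply/setP => d; apply/imset2P/idP => [[u v]|Jd].
  by rewrite !mem_coset => Ju Jv ->; rewrite -(subrBB _ _ x) subgrpB.
by exists (x + d) x; rewrite ?mem_coset ?subrr ?subgrp0 // addrC ?addKr.
Qed.

Lemma diffs_sub_coset H A x :
  is_subgrp H -> A \subset coset_of H x -> diffs A \subset H.
Proof. by move=> hH sAc; rewrite -(diffs_coset x hH); apply: imset2S. Qed.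

Lemma diffgrp_id A : is_subgrp (diffs A) -> diffgrp A = diffs A.
Proof.
move=> hD; apply/eqP; rewrite eqEsubset (bigcap_inf (diffs A)) ?hD ?subxx //=.
by apply/bigcapsP => K /andP [].
Qed.

Lemma diffgrp_coset J x : is_subgrp J -> diffgrp (coset_of J x) = J.
Proof. by move=> hJ; rewrite diffgrp_id diffs_coset. Qed.

End Cosets.

Definition stable (G : finZmodType) (K S : {set G}) := {in K & S, forall k y, y + k \in S}.

Section Stable.
Variable G : finZmodType.
Implicit Types (A K L S T : {set G}) (x : G).

Lemma stableS K L S : K \subset L -> stable L S -> stable K S.
Proof. by move=> /subsetP sKL stS k y /sKL; apply: stS. Qed.

Lemma stableU K S T : stable K S -> stable K T -> stable K (S :|: T).
Proof.
move=> stS stT k y Kk /setUP [Sy|Ty]; rewrite inE; first by rewrite stS.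
by rewrite stT ?orbT.
Qed.

Lemma stableD K S T : is_subgrp K -> stable K S -> stable K T -> stable K (S :\: T).
Proof.
move=> hK stS stT k y Kk /setDP [Sy Ty]; rewrite inE stS // andbT.
by apply: contra Ty => /(stT _ _ (subgrpN hK Kk)); rewrite addrK.
Qed.

Lemma stable_bigcup (I : finType) (P : pred I) (F : I -> {set G}) K :
  (forall i, P i -> stable K (F i)) -> stable K (\bigcup_(i | P i) F i).
Proof. by move=> stF k y Kk /bigcupP [i Pi Fy]; apply/bigcupP; exists i; rewrite ?stF. Qed.

Lemma stable_coset K x : is_subgrp K -> stable K (coset_of K x).
Proof. by move=> hK k y Kk; rewrite !mem_coset addrAC => Kyx; rewrite subgrpD. Qed.

Lemma stable_union_of_cosets K A : is_subgrp K -> union_of_cosets K A -> stable K A.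
Proof. by move=> hK [X ->]; apply: stable_bigcup => x _; apply: stable_coset. Qed.

Lemma card_translate_in_stable A S d :
  stable (diffs A) S ->
  let n := #|[set a in A | a - d \in S]| in n = 0%N \/ n = #|A|.
Proof.
move=> stS n; have [/exists_inP [a0 Aa0 Sa0]|none] := boolP [exists a in A, a - d \in S].
  right; apply: eq_card => a; rewrite inE; case Aa: (a \in A) => //=.
  have := stS _ _ (imset2_f (fun u v => u - v) Aa Aa0) Sa0.
  by rewrite addrC subrKA.
left; apply: eq_card0 => a; rewrite inE; apply/andP => [[Aa Sa]].
by case/negP: none; apply/exists_inP; exists a.
Qed.
End Stable.

Section Bimodal.
Variable G : finZmodType.
Implicit Types (coll : {set {set G}}) (A : {set G}) (y d : G).

Lemma other_blockE coll A y : trivIset coll -> A \in coll ->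
  [exists B in coll, (B != A) && (y \in B)] = (y \in cover coll :\: A).
Proof.
move=> tI collA; rewrite -coverD1 //; apply/exists_inP/bigcupP.
  by case=> B collB /andP [nBA yB]; exists B; rewrite // !inE nBA.
by case=> B /setD1P [nBA collB] yB; exists B; rewrite // nBA.
Qed.

Lemma NcountE coll A d : trivIset coll -> A \in coll ->
  Ncount coll A d = #|[set a in A | a - d \in cover coll :\: A]|.
Proof.
move=> tI collA; rewrite -(card_imset _ (f := fun a => (a, a - d))); last by move=> a b [].
apply: eq_card => -[a b]; rewrite inE /= other_blockE //.
apply/and3P/imsetP => [[Aa Sb /eqP <-]|[a' /setIdP [Aa' Sa'] [-> ->]]].
  by exists a; [rewrite in_set subKr Aa | rewrite subKr].
by move: Sa'; rewrite Aa' subKr eqxx => ->.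
Qed.

Lemma bimodal_stable coll : trivIset coll ->
  {in coll, forall A, stable (diffs A) (cover coll :\: A)} -> bimodal coll.
Proof.
by move=> tI stA A collA d _; rewrite NcountE //; apply: card_translate_in_stable; apply: stA.
Qed.

End Bimodal.

Lemma partition_bigcup (T : finType) (C : {set {set T}}) (P : {set T} -> {set {set T}}) :
  trivIset C -> {in C, forall c, partition (P c) c} ->
  partition (\bigcup_(c in C) P c) (cover C).
Proof.
move=> tiC partP; apply/and3P; split.
- apply/eqP/setP => y; apply/bigcupP/bigcupP => [[B /bigcupP [c Cc PcB] By]|[c Cc cy]].
    by exists c => //; apply: subsetP (partitionS (partP c Cc) PcB) y By.
  move: cy; rewrite -(cover_partition (partP c Cc)) => /bigcupP [B PcB By].
  by exists B => //; apply/bigcupP; exists c.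
- apply/trivIsetP => B B' /bigcupP [c Cc PcB] /bigcupP [c' Cc' Pc'B'] nBB'.
  have [eqcc'|ncc'] := eqVneq c c'.
    by rewrite eqcc' in PcB; apply: (trivIsetP (partition_trivIset (partP c' Cc'))).
  apply: disjointW (partitionS (partP c Cc) PcB) (partitionS (partP c' Cc') Pc'B') _.
  exact: (trivIsetP tiC).
- by apply/bigcupP => -[c Cc]; rewrite (partition0 (partP c Cc)).
Qed.

Section Construction.
Variables (G : finZmodType) (H1 A1 : {set G}).
Variables (C : {set {set G}}) (P : {set G} -> {set {set G}}).
Hypotheses (H1_subgrp : is_subgrp H1) (A1_sub : A1 \subset H1).
Hypothesis C_cosets : forall c, c \in C -> (exists x, c = coset_of H1 x) /\ c != H1.
Hypothesis P_partition : forall c, c \in C -> partition (P c) c.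
Hypothesis P_cosets : forall c B, c \in C -> B \in P c ->
  exists J x, [/\ is_subgrp J, union_of_cosets J A1 & B = coset_of J x].

Let blocks := \bigcup_(c in C) P c.
Let coll := A1 |: blocks.

Lemma trivIset_C : trivIset C.
Proof.
apply/trivIsetP => c c' Cc Cc'.
have [[x ->] _] := C_cosets Cc; have [[x' ->] _] := C_cosets Cc'.
exact: disjoint_cosets.
Qed.

Lemma disjoint_H1_cover_C : [disjoint H1 & cover C].
Proof.
apply: bigcup_disjoint => c Cc; have [[x cx] ncH1] := C_cosets Cc.
by rewrite -(coset0 H1) cx disjoint_cosets // -cx coset0 eq_sym.
Qed.

Lemma stable_cover_C : stable H1 (cover C).
Proof. by apply: stable_bigcup => c /C_cosets [[x ->] _]; apply: stable_coset. Qed.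

Lemma blocks_partition : partition blocks (cover C).
Proof. exact: partition_bigcup trivIset_C P_partition. Qed.

Lemma block_coset B : B \in blocks ->
  exists J x, [/\ is_subgrp J, J \subset H1, stable J A1 & B = coset_of J x].
Proof.
case/bigcupP => c Cc PcB; have [J [x [hJ cosA1 eqB]]] := P_cosets Cc PcB.
exists J, x; split => //; last exact: stable_union_of_cosets.
have [[z cz] _] := C_cosets Cc; rewrite -(diffs_coset x hJ) -eqB.
by apply: (diffs_sub_coset (x := z)) => //; rewrite -cz (partitionS (P_partition Cc)).
Qed.

Lemma trivIset_coll : trivIset coll /\ A1 \notin blocks.
Proof.
have /and3P [_ tiB B0] := blocks_partition.
apply: trivIsetU1 => // B blocksB.
apply: disjointW A1_sub (partitionS blocks_partition blocksB) disjoint_H1_cover_C.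
Qed.

Lemma cover_coll : cover coll = A1 :|: cover C.
Proof.
by rewrite -(cover_partition blocks_partition) /cover bigcup_setU big_set1.
Qed.

Lemma stable_cover_coll_setD A : A \in coll -> stable (diffs A) (cover coll :\: A).
Proof.
have [tiColl A1_blocks] := trivIset_coll.
case/setU1P => [->|/block_coset [J [x [hJ sJH1 stA1 ->]]]].
  rewrite -coverD1 ?setU11 // setU1K // (cover_partition blocks_partition).
  by apply: stableS stable_cover_C; apply: (diffs_sub_coset (x := 0)); rewrite ?coset0.
rewrite diffs_coset //; apply: (stableD hJ); last exact: stable_coset.
by rewrite cover_coll; apply: stableU stA1 (stableS sJH1 stable_cover_C).
Qed.

Lemma bimodal_coll : bimodal coll.
Proof. exact: bimodal_stable trivIset_coll.1 stable_cover_coll_setD. Qed.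

Lemma small_mem_coll A : A \in coll -> (#|A| < #|diffgrp A|)%N -> A = A1.
Proof.
case/setU1P => // /block_coset [J [x [hJ _ _ ->]]].
by rewrite diffgrp_coset // card_coset ltnn.
Qed.

End Construction.

Theorem theorem3p17 (G : finZmodType) (H1 A1 : {set G})
  (HH1 : is_subgrp H1) (HA1 : A1 \proper H1) (Hgen : diffgrp A1 = H1)
  (C : {set {set G}})
  (HC : forall c, c \in C -> (exists x : G, c = coset_of H1 x) /\ c != H1)
  (P : {set G} -> {set {set G}})
  (HP : forall c, c \in C ->
     partition (P c) c /\
     forall B, B \in P c -> exists (J : {set G}) (x : G),
        [/\ is_subgrp J, union_of_cosets J A1 & B = coset_of J x]) :
  let coll := A1 |: \bigcup_(c in C) P c in
  [/\ trivIset coll, bimodal coll,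
      (#|A1| < #|diffgrp A1|)%N &
      forall A, A \in coll -> (#|A| < #|diffgrp A|)%N -> A = A1].
Proof.
move=> coll; have A1_sub := proper_sub HA1.
have P_partition c (Cc : c \in C) := (HP c Cc).1.
have P_cosets c B (Cc : c \in C) := (HP c Cc).2 B.
split.
- exact: (trivIset_coll HH1 A1_sub HC P_partition).1.
- exact: bimodal_coll HH1 A1_sub HC P_partition P_cosets.
- by rewrite Hgen proper_card.
- exact: small_mem_coll HH1 HC P_partition P_cosets.
Qed.
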